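(* Let $n\ge1$, $\mathcal{T}=\{v\in\mathbb{R}^{n+1}: v^0,\dots,v^n>0\}$ and $F:\mathcal{T}\to(0,\infty)$, $F(v)=(v^0v^1\cdots v^n)^{1/(n+1)}$. Then for every $v\in\mathcal{T}$ the matrix $g_{ij}(v)=\frac12\partial_i\partial_j(F^2)(v)$ has Lorentzian signature $(+,-,\dots,-)$, and the fundamental inequality $\frac{\partial F}{\partial v^i}(v)w^i\ge F(w)$ for all $v,w\in\mathcal{T}$ is equivalent to the arithmetic–geometric mean inequality $$\frac{a_0+a_1+\dots+a_n}{n+1}\ge (a_0a_1\cdots a_n)^{1/(n+1)}\quad\text{for all } a_0,\dots,a_n>0,$$ which therefore holds.
   Context: Summation convention over repeated indices $i=0,\dots,n$. *)

From HB Require Import structures.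
From mathcomp Require Import all_boot all_order all_algebra.
From mathcomp Require Import all_classical all_reals all_analysis.
Set Implicit Arguments. Unset Strict Implicit. Unset Printing Implicit Defensive.
Import Order.TTheory GRing.Theory Num.Theory.
Import numFieldNormedType.Exports.
Local Open Scope ring_scope.

Definition posCone (R : realType) (n : nat) (v : 'rV[R]_(n.+1)) : Prop :=
  forall i : 'I_n.+1, 0 < v 0 i.

(* F(v) = (v^0 v^1 ... v^n)^{1/(n+1)}  (only its values on the open cone matter). *)
Definition Fgm (R : realType) (n : nat) (v : 'rV[R]_(n.+1)) : R :=
  (\prod_(i < n.+1) v 0 i) `^ (n.+1%:R)^-1.

Definition ebasis (R : realType) (n : nat) (i : 'I_n.+1) : 'rV[R]_(n.+1) :=
  delta_mx 0 i.

Definition pder (R : realType) (n : nat) (f : 'rV[R]_(n.+1) -> R)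
  (i : 'I_n.+1) (v : 'rV[R]_(n.+1)) : R :=
  'D_(ebasis R i) f v.

Definition gmetric (R : realType) (n : nat) (v : 'rV[R]_(n.+1)) : 'M[R]_(n.+1) :=
  \matrix_(i, j) (2^-1 * pder (pder (fun u => Fgm u ^+ 2) j) i v).

Definition lorentzian_signature (R : realType) (n : nat) (g : 'M[R]_(n.+1)) : Prop :=
  exists P : 'M[R]_(n.+1), P \in unitmx /\
    P^T *m g *m P = diag_mx (\row_(i < n.+1) (if i == ord0 then 1 else -1)).

Definition fundamental_inequality (R : realType) (n : nat) : Prop :=
  forall v w : 'rV[R]_(n.+1), posCone v -> posCone w ->
    \sum_(i < n.+1) pder (@Fgm R n) i v * w 0 i >= Fgm w.

Definition amgm (R : realType) (n : nat) : Prop :=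
  forall a : 'I_n.+1 -> R, (forall i, 0 < a i) ->
    (\sum_(i < n.+1) a i) / n.+1%:R >= (\prod_(i < n.+1) a i) `^ (n.+1%:R)^-1.

From HB Require Import structures.
From mathcomp Require Import all_boot all_order all_algebra.
From mathcomp Require Import all_classical all_reals all_analysis.
From mathcomp Require Import ring lra.
Import Order.TTheory GRing.Theory Num.Theory.
Import numFieldNormedType.Exports.
Set Implicit Arguments. Unset Strict Implicit. Unset Printing Implicit Defensive.
Local Open Scope ring_scope.

(* Every power
   G_r(v) = (v^0 ... v^n)^r of the coordinate product has the explicit partial
   derivatives d_i G_r = r G_r / v^i and
   d_i d_j G_r = r G_r (r - delta_ij) / (v^i v^j).
   Since F^2 = G_(2/N), this gives  g(v) = c D^-1 (2 u u^T - I) D^-1  with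
   c = F(v)^2 / N > 0, D = diag(v) and u the unit vector (1,...,1)/sqrt N.
   A Householder reflection H exchanging u and e_0 conjugates 2 u u^T - I to
   2 e_0 e_0^T - I = diag(1,-1,...,-1), so P = c^(-1/2) D H exhibits the
   Lorentzian signature (n >= 1 is needed so that u <> e_0).
   For the fundamental inequality, d_i F(v) w^i = F(v) * mean_i (w^i / v^i):
   at v = (1,...,1) it is literally AM-GM for the w^i, and conversely AM-GM
   applied to the ratios a_i = w^i / v^i gives it back, because
   F(w) = F(v) (prod a_i)^(1/N).  AM-GM itself follows from ln x <= x - 1. *)

Section DirectionalDerivative.
Variables (R : realType) (V : normedModType R).

Lemma derive_along_line (f : V -> R) (a v : V) :
  'D_v f a = 'D_1 (fun h : R => f (h *: v + a)) 0.
Proof.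
rewrite /derive; do 2 f_equal.
by apply/funext => h /=; rewrite addr0 scale0r add0r [_%:A]mulr1.
Qed.

End DirectionalDerivative.

Section PowerOfProduct.
Variables (R : realType) (n : nat).
Local Notation V := 'rV[R]_(n.+1).

(* G_r(u) = (u^0 ... u^n)^r; F is G_(1/N) and F^2 is G_(2/N). *)
Definition powProd (r : R) (u : V) : R := (\prod_(i < n.+1) u 0 i) `^ r.

Lemma sqr_Fgm : (fun u : V => Fgm u ^+ 2) = powProd ((n.+1%:R)^-1 * 2).
Proof.
by apply/funext => u; rewrite /Fgm /powProd powRrM powR_mulrn // powR_ge0.
Qed.

Lemma prod_posCone_gt0 (u : V) : posCone u -> 0 < \prod_(j < n.+1) u 0 j.
Proof. by move=> pu; apply: prodr_gt0 => j _; exact: pu. Qed.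

Lemma powProd_gt0 (r : R) (u : V) : posCone u -> 0 < powProd r u.
Proof. by move=> pu; rewrite powR_gt0 // prod_posCone_gt0. Qed.

Lemma coord_shift (u : V) (i j : 'I_n.+1) (h : R) :
  (h *: ebasis R i + u) 0 j = u 0 j + (if j == i then h else 0).
Proof. by rewrite !mxE /=; case: (j == i); rewrite ?mulr1 ?mulr0 addrC. Qed.

Lemma prod_shift (u : V) (i : 'I_n.+1) (h : R) :
  \prod_(j < n.+1) (h *: ebasis R i + u) 0 j =
  (u 0 i + h) * \prod_(j < n.+1 | j != i) u 0 j.
Proof.
rewrite (bigD1 i) //= coord_shift eqxx; congr (_ * _).
by apply: eq_bigr => j /negbTE ji; rewrite coord_shift ji addr0.
Qed.

Lemma near_posCone (v : V) (i : 'I_n.+1) : posCone v ->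
  \forall h \near (0:R), posCone (h *: ebasis R i + v).
Proof.
move=> pv; have vi := pv i.
near=> h => k; rewrite coord_shift.
case: ifP => [/eqP -> | _]; last by rewrite addr0.
have : `|h| < v 0 i by near: h; exists (v 0 i) => //= y /=; rewrite sub0r normrN.
by rewrite ltr_norml => /andP[h1 h2]; lra.
Unshelve. all: by end_near. Qed.

Lemma is_derive_affine_mul (a b x : R) :
  is_derive x 1 (fun h : R => (a + h) * b) b.
Proof.
have H1 : is_derive x (1:R) (cst a + id : R -> R) (0 + 1) by apply: is_deriveD.
have H2 : is_derive x (1:R) ((cst a + id) * cst b : R -> R)
    ((a + x) *: 0 + b *: (0 + 1)) by apply: is_deriveM.
by apply: (is_derive_eq H2); rewrite scaler0 !add0r [_%:A]mulr1.
Qed.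

Lemma powProd_line_is_derive (r : R) (u : V) (i : 'I_n.+1) : posCone u ->
  is_derive (0:R) 1 (fun h : R => powProd r (h *: ebasis R i + u))
    (r * powProd r u / u 0 i).
Proof.
move=> pu; set Q := \prod_(j < n.+1 | j != i) u 0 j.
have Q0 : 0 < Q by apply: prodr_gt0 => j _; exact: pu.
have ui0 := pu i.
have -> : (fun h : R => powProd r (h *: ebasis R i + u)) =
    (fun y : R => y `^ r) \o (fun h : R => (u 0 i + h) * Q).
  by apply/funext => h; rewrite /powProd prod_shift.
have prodE : \prod_(j < n.+1) u 0 j = (u 0 i + 0) * Q.
  by rewrite -(prod_shift u i 0) scale0r add0r.
have Hx : 0 < (u 0 i + 0) * Q by rewrite addr0 mulr_gt0.
have H := @is_derive1_comp R (fun y : R => y `^ r) (fun h : R => (u 0 i + h) * Q) 0 _ _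
  (is_derive1_powR r Hx) (is_derive_affine_mul (u 0 i) Q 0).
apply: (is_derive_eq H).
rewrite /powProd prodE addr0 powRB; last by apply/implyP => _; rewrite mulf_neq0 ?gt_eqF.
rewrite powRr1 ?mulr_ge0 ?ltW //.
by field; rewrite ?gt_eqF ?powR_gt0 ?mulr_gt0.
Qed.

Lemma pder_powProd (r : R) (u : V) (i : 'I_n.+1) : posCone u ->
  pder (powProd r) i u = r * powProd r u / u 0 i.
Proof.
move=> pu; have H := @powProd_line_is_derive r u i pu.
by rewrite /pder derive_along_line (@derive_val _ _ _ _ _ _ _ H).
Qed.

(* Second partials: d_i d_j G_r (v) = r G_r(v) (r - delta_ij) / (v^i v^j).
   Near v the inner partial is given by [pder_powProd], a quotient of the
   smooth line function by v^j (+ h when j = i). *)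
Lemma pder2_powProd (r : R) (v : V) (i j : 'I_n.+1) : posCone v ->
  pder (pder (powProd r) j) i v =
  r * powProd r v / (v 0 i * v 0 j) * (r - (i == j)%:R).
Proof.
move=> pv; rewrite {1}/pder derive_along_line.
set G := fun h : R => powProd r (h *: ebasis R i + v).
have HG : is_derive (0:R) 1 G (r * powProd r v / v 0 i).
  exact: powProd_line_is_derive.
have G0 : G 0 = powProd r v by rewrite /G scale0r add0r.
have vi := pv i; have vj := pv j.
rewrite (@near_eq_derive _ _ _ _
    (fun h : R => r * G h / (v 0 j + (if j == i then h else 0)))); last first.
  near=> h; rewrite pder_powProd; last by near: h; exact: near_posCone.
  by rewrite coord_shift.
have HrG : is_derive (0:R) (1:R) (cst r * G : R -> R)
    (r *: (r * powProd r v / v 0 i) + G 0 *: 0) by apply: is_deriveM.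
case: (eqVneq j i) => [-> | ji].
- have Hlin : is_derive (0:R) (1:R) (cst (v 0 i) + id : R -> R) (0 + 1).
    by apply: is_deriveD.
  have nz : v 0 i + 0 != 0 by rewrite addr0 lt0r_neq0.
  have H := is_deriveM HrG (is_deriveV nz Hlin).
  rewrite (@derive_val _ _ _ _ _ _ _ H) /= G0 /GRing.scale /= !fctE /= G0 /cst /=.
  by field; rewrite gt_eqF.
- rewrite addr0.
  have H : is_derive (0:R) (1:R) ((cst r * G) * cst ((v 0 j)^-1) : R -> R)
      ((r * G 0) *: 0 + (v 0 j)^-1 *: (r *: (r * powProd r v / v 0 i) + G 0 *: 0)).
    by apply: is_deriveM.
  rewrite (@derive_val _ _ _ _ _ _ _ H) /= G0 /GRing.scale /=.
  by field; rewrite !gt_eqF.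
Unshelve. all: by end_near. Qed.

End PowerOfProduct.

Section Reflection.
Variables (R : fieldType) (m : nat) (u e : 'cV[R]_m) (t : R).
Hypotheses (uTu : u^T *m u = 1%:M) (eTe : e^T *m e = 1%:M).
Hypotheses (eTu : e^T *m u = t%:M) (t_neq1 : t != 1).

(* The reflection in the hyperplane orthogonal to e - u; it swaps the two unit
   vectors u and e (t is their inner product). *)
Definition reflector : 'M[R]_m := 1%:M - (1 - t)^-1 *: ((e - u) *m (e - u)^T).

Let uTe : u^T *m e = t%:M.
Proof. by rewrite -[u^T *m e]trmxK trmx_mul trmxK eTu tr_scalar_mx. Qed.

Let trD : (e - u)^T = e^T - u^T.
Proof. by rewrite linearB. Qed.

Let dTu : (e - u)^T *m u = (t - 1)%:M.
Proof. by rewrite trD mulmxBl eTu uTu raddfB. Qed.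

Let dTd : (e - u)^T *m (e - u) = (2 - 2 * t)%:M.
Proof.
rewrite trD mulmxBl !mulmxBr eTe eTu uTe uTu -!raddfB /=.
by congr (_%:M); ring.
Qed.

Let one_sub_t_neq0 : 1 - t != 0.
Proof. by rewrite subr_eq0 eq_sym. Qed.

Lemma reflector_sym : reflector^T = reflector.
Proof. by rewrite /reflector linearB /= linearZ /= trmx1 trmx_mul trmxK. Qed.

Lemma reflector_maps : reflector *m u = e.
Proof.
rewrite /reflector mulmxBl mul1mx -scalemxAl -mulmxA dTu mul_mx_scalar scalerA.
have -> : (1 - t)^-1 * (t - 1) = -1 by field.
by rewrite scaleN1r opprK addrC subrK.
Qed.

Lemma reflector_invol : reflector *m reflector = 1%:M.
Proof.
set A := (e - u) *m (e - u)^T.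
have AA : A *m A = (2 - 2 * t) *: A.
  by rewrite /A mulmxA -[_ *m _ *m (e - u)]mulmxA dTd mul_mx_scalar -scalemxAl.
rewrite /reflector -/A mulmxBl mul1mx mulmxBr mulmx1 -scalemxAl -scalemxAr AA.
rewrite !scalerA opprB addrA.
have -> : (1 - t)^-1 * (1 - t)^-1 * (2 - 2 * t) = (1 - t)^-1 + (1 - t)^-1 by field.
by rewrite scalerDl addrA addrK subrK.
Qed.

Lemma reflector_conj (c : R) :
  reflector^T *m (c *: (u *m u^T) - 1%:M) *m reflector = c *: (e *m e^T) - 1%:M.
Proof.
have uH : u^T *m reflector = e^T by rewrite -{1}reflector_sym -trmx_mul reflector_maps.
set H := reflector.
rewrite reflector_sym (mulmxBr H) (mulmx1 H) (mulmxBl _ H H) reflector_invol.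
rewrite -(scalemxAr c H) -(scalemxAl c _ H).
by rewrite (mulmxA H u) -(mulmxA (H *m u)) uH reflector_maps.
Qed.

End Reflection.

Section DiagonalInverse.
Variables (R : fieldType) (m : nat) (d : 'rV[R]_m).
Hypothesis d_neq0 : forall i, d 0 i != 0.

Definition diag_inv : 'M[R]_m := diag_mx (\row_i (d 0 i)^-1).

Lemma diag_mulV : diag_mx d *m diag_inv = 1%:M.
Proof.
apply/matrixP => i j; rewrite mul_diag_mx !mxE.
by case: (i == j); rewrite ?mulr1n ?mulr0n ?mulr0 // mulfV.
Qed.

Lemma diag_mulVl : diag_inv *m diag_mx d = 1%:M.
Proof.
apply/matrixP => i j; rewrite mul_diag_mx !mxE.
by case: (i == j); rewrite ?mulr1n ?mulr0n ?mulr0 // mulVf.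
Qed.

Lemma diag_unit : diag_mx d \in unitmx.
Proof. by rewrite unitmxE det_diag unitfE; apply/prodf_neq0 => i _. Qed.

End DiagonalInverse.

Section Lorentzian.
Variables (R : realType) (n : nat).
Hypothesis hn : (1 <= n)%N.
Local Notation N := n.+1.

(* The unit vectors u = (1,...,1)/sqrt N and e_0; their inner product is
   1/sqrt N, which differs from 1 because N >= 2. *)
Definition isqrtN : R := (Num.sqrt (N%:R : R))^-1.
Definition unif : 'cV[R]_N := const_mx isqrtN.
Definition e0 : 'cV[R]_N := delta_mx 0 0.

Lemma isqrtN_sqr : isqrtN * isqrtN = (N%:R)^-1.
Proof. by rewrite /isqrtN -invfM -expr2 sqr_sqrtr // ler0n. Qed.

Lemma isqrtN_neq1 : isqrtN != 1.
Proof.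
apply/negP => /eqP t1; have := isqrtN_sqr; rewrite t1 mulr1 => /esym/eqP.
by rewrite invr_eq1 pnatr_eq1 => /eqP [] n0; move: hn; rewrite n0.
Qed.

Lemma unif_unit : unif^T *m unif = 1%:M.
Proof.
rewrite [LHS]mx11_scalar; congr (_%:M); rewrite !mxE.
under eq_bigr do rewrite !mxE.
by rewrite sumr_const card_ord isqrtN_sqr -[_ *+ _]mulr_natr mulVf // pnatr_eq0.
Qed.

Lemma e0_unit : e0^T *m e0 = 1%:M.
Proof.
rewrite [LHS]mx11_scalar; congr (_%:M); rewrite !mxE.
rewrite (bigD1 0) //= big1 => [|i /negbTE i0]; rewrite !mxE ?i0 ?eqxx //=.
  by rewrite mulr1 addr0.
by rewrite mul0r.
Qed.

Lemma e0Tunif : e0^T *m unif = isqrtN%:M.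
Proof.
rewrite [LHS]mx11_scalar; congr (_%:M); rewrite !mxE.
rewrite (bigD1 0) //= big1 => [|i /negbTE i0]; rewrite !mxE ?i0 ?eqxx //=.
  by rewrite mul1r addr0.
by rewrite mul0r.
Qed.

Lemma model_lorentz_form : 2 *: (e0 *m e0^T) - 1%:M =
  diag_mx (\row_(i < N) (if i == ord0 then 1 else -1) : 'rV[R]_N).
Proof.
apply/matrixP => i j; rewrite !mxE big_ord1 !mxE.
have -> : (ord0 == 0 :> 'I_1) = true by [].
rewrite !andbT.
have E : forall k : 'I_N, (k == 0) = (k == ord0) by [].
rewrite !E.
case: (eqVneq i j) => [<- | ij].
  by case: (i == ord0); rewrite /= ?mulr1n ?mulr0n; lra.
rewrite mulr0n subr0.
case: (eqVneq i ord0) => [ei | ni].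
  by subst i; rewrite eq_sym (negbTE ij) /= mulr0n !mulr0.
by rewrite ?(negbTE ni) /= mul0r mulr0 mulr0n.
Qed.

Lemma gmetricE (v : 'rV[R]_N) (pv : posCone v) :
  gmetric v = (powProd (N%:R^-1 * 2) v / N%:R) *:
    (diag_inv v *m (2 *: (unif *m unif^T) - 1%:M) *m diag_inv v).
Proof.
have vn0 i : v 0 i != 0 by rewrite gt_eqF.
apply/matrixP => i j.
rewrite /gmetric sqr_Fgm mul_mx_diag mul_diag_mx !mxE pder2_powProd // big_ord1 !mxE.
rewrite isqrtN_sqr.
by case: (i == j); rewrite ?mulr1n ?mulr0n; field; rewrite !vn0 /= addrC natr1 pnatr_eq0.
Qed.

(* The congruence P = c^(-1/2) diag(v) H brings g(v) to diag(1,-1,...,-1). *)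
Lemma gmetric_lorentzian (v : 'rV[R]_N) : posCone v -> lorentzian_signature (gmetric v).
Proof.
move=> pv; have vn0 i : v 0 i != 0 by rewrite gt_eqF.
set c := powProd (N%:R^-1 * 2) v / N%:R.
have c0 : 0 < c by rewrite divr_gt0 ?powProd_gt0 ?ltr0n.
have sc0 : 0 < Num.sqrt c by rewrite sqrtr_gt0.
set H := reflector unif e0 isqrtN.
have HH : H *m H = 1%:M by exact: reflector_invol unif_unit e0_unit e0Tunif isqrtN_neq1.
exists ((Num.sqrt c)^-1 *: (diag_mx v *m H)); split.
  rewrite unitmxZ ?unitfE ?invr_eq0 ?gt_eqF // unitmx_mul diag_unit //.
  by case: (mulmx1_unit HH).
rewrite gmetricE // -/c [(_ *: _)^T]linearZ /= trmx_mul tr_diag_mx.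
rewrite -?scalemxAr -?scalemxAl -?scalemxAr -?scalemxAl !scalerA !mulmxA.
rewrite -(mulmxA _ (diag_mx v) (diag_inv v)) diag_mulV // mulmx1.
rewrite -(mulmxA _ (diag_inv v) (diag_mx v)) diag_mulVl // mulmx1.
have -> : (Num.sqrt c)^-1 * c * (Num.sqrt c)^-1 = 1.
  by rewrite -{2}(sqr_sqrtr (ltW c0)); field; exact: lt0r_neq0.
rewrite scale1r (reflector_conj unif_unit e0_unit e0Tunif isqrtN_neq1).
exact: model_lorentz_form.
Qed.

End Lorentzian.

Section AMGM.
Variables (R : realType) (n : nat).
Local Notation N := n.+1.

Lemma sum_pos_gt0 (a : 'I_N -> R) : (forall i, 0 < a i) -> 0 < \sum_(i < N) a i.
Proof.
move=> ha; rewrite (bigD1 ord0) //=; apply: (lt_le_trans (ha ord0)).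
by rewrite lerDl; apply: sumr_ge0 => i _; exact: ltW.
Qed.

(* Product form of AM-GM: prod a_i <= A^N for the mean A, obtained by summing
   ln (a_i / A) <= a_i / A - 1 over i. *)
Lemma prod_le_mean_pow (a : 'I_N -> R) : (forall i, 0 < a i) ->
  \prod_(i < N) a i <= ((\sum_(i < N) a i) / N%:R) ^+ N.
Proof.
move=> ha; set A := (\sum_(i < N) a i) / N%:R.
have S0 := sum_pos_gt0 ha.
have N0 : (0 : R) < N%:R by rewrite ltr0n.
have A0 : 0 < A by rewrite divr_gt0.
have ratio_gt0 i : 0 < a i / A by rewrite divr_gt0.
have sum_ln_le0 : \sum_(i < N) ln (a i / A) <= 0.
  have ln_le i : ln (a i / A) <= a i / A - 1.
    by rewrite -[X in ln X](subrK 1) addrC le_ln1Dx // ltrBrDl subrr.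
  apply: (le_trans (ler_sum _ (fun i _ => ln_le i))).
  rewrite sumrB sumr_const card_ord -mulr_suml /A.
  have -> : (\sum_(i < N) a i) / ((\sum_(i < N) a i) / N%:R) = N%:R.
    by field; rewrite !gt_eqF.
  by rewrite subrr.
have : \prod_(i < N) (a i / A) <= 1.
  rewrite -[\prod_(i < N) _](_ : expR (\sum_(i < N) ln (a i / A)) = _).
    by rewrite -expR0 ler_expR.
  by rewrite expR_sum; apply: eq_bigr => i _; rewrite lnK // posrE.
by rewrite prodf_div prodr_const card_ord ler_pdivrMr ?exprn_gt0 // mul1r.
Qed.

Lemma amgm_holds : amgm R n.
Proof.
move=> a ha; set A := (\sum_(i < N) a i) / N%:R.
have A0 : 0 <= A by rewrite divr_ge0 ?ler0n // ltW // sum_pos_gt0.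
have Ni : (0:R) <= (N%:R)^-1 by rewrite invr_ge0 ler0n.
have Pn : \prod_(i < N) a i \is Num.nneg.
  by rewrite nnegrE; apply: prodr_ge0 => i _; exact: ltW.
have An : A ^+ N \is Num.nneg by rewrite nnegrE exprn_ge0.
apply: (le_trans (ge0_ler_powR Ni Pn An (prod_le_mean_pow ha))).
by rewrite -powR_mulrn // -powRrM mulfV ?pnatr_eq0 // powRr1.
Qed.

End AMGM.

Section FundamentalInequality.
Variables (R : realType) (n : nat).
Local Notation N := n.+1.
Local Notation V := 'rV[R]_N.

Lemma Fgm_dir_derivative (v w : V) : posCone v ->
  \sum_(i < N) pder (@Fgm R n) i v * w 0 i =
  Fgm v * ((\sum_(i < N) w 0 i / v 0 i) / N%:R).
Proof.
move=> pv; have vn0 i : v 0 i != 0 by rewrite gt_eqF.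
rewrite mulr_suml mulr_sumr; apply: eq_bigr => i _.
rewrite (pder_powProd _ _ pv) /Fgm -/(powProd _ v).
by field; rewrite vn0 addrC natr1 pnatr_eq0.
Qed.

Lemma Fgm_ratio (v w : V) : posCone v -> posCone w ->
  Fgm w = Fgm v * (\prod_(i < N) (w 0 i / v 0 i)) `^ (N%:R)^-1.
Proof.
move=> pv pw; have vn0 i : v 0 i != 0 by rewrite gt_eqF.
rewrite /Fgm; have -> : \prod_(i < N) w 0 i = \prod_(i < N) v 0 i * \prod_(i < N) (w 0 i / v 0 i).
  by rewrite -big_split; apply: eq_bigr => i _ /=; rewrite mulrC divfK.
rewrite powRM //; first exact: ltW (prod_posCone_gt0 pv).
by apply: prodr_ge0 => i _; rewrite ltW // divr_gt0.
Qed.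

(* AM-GM for the ratios w^i / v^i yields the fundamental inequality. *)
Lemma fundamental_of_amgm : amgm R n -> fundamental_inequality R n.
Proof.
move=> amgmN v w pv pw.
rewrite Fgm_dir_derivative // (Fgm_ratio pv pw).
apply: ler_wpM2l; first by rewrite ltW // powProd_gt0.
by apply: amgmN => i; rewrite divr_gt0.
Qed.

(* At v = (1,...,1) the fundamental inequality is AM-GM for the coordinates of w. *)
Lemma amgm_of_fundamental : fundamental_inequality R n -> amgm R n.
Proof.
move=> fund a ha.
have p1 : posCone (const_mx 1 : V) by move=> i; rewrite mxE ltr01.
have pa : posCone (\row_i a i : V) by move=> i; rewrite mxE.
have := fund _ _ p1 pa; rewrite Fgm_dir_derivative //.
have F1 : Fgm (const_mx 1 : V) = 1.
  by rewrite /Fgm big1 ?powR1 // => i _; rewrite mxE.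
have sumE : \sum_(i < N) (\row_j a j : V) 0 i / (const_mx 1 : V) 0 i = \sum_(i < N) a i.
  by apply: eq_bigr => i _; rewrite !mxE divr1.
have prodE : \prod_(i < N) (\row_j a j : V) 0 i = \prod_(i < N) a i.
  by apply: eq_bigr => i _; rewrite mxE.
by rewrite F1 mul1r sumE /Fgm prodE.
Qed.

End FundamentalInequality.

Theorem mainTheorem7 (R : realType) (n : nat) (hn : (1 <= n)%N) :
  (forall v : 'rV[R]_(n.+1), posCone v -> lorentzian_signature (gmetric v))
  /\ (fundamental_inequality R n <-> amgm R n)
  /\ amgm R n.
Proof.
split; first exact: gmetric_lorentzian.
split; last exact: amgm_holds.
by split; [exact: amgm_of_fundamental | exact: fundamental_of_amgm].
Qed.
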